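(* The RHA process is pseudo-asymptotically mean stationary: for every $m\ge1$ and every string $x_{1:m}$ the limit $\mu(x_{1:m})=\lim_{N\to\infty}\frac1N\sum_{i=1}^N P(X_{i:i+m-1}=x_{1:m})$ exists. Moreover, for all $n\ge0$ with $m\le 2^n$ and all $k\in\mathbb N$ ($k\ge1$), $$\mu(x_{1:m})=\frac{1}{2^n}\sum_{j=0}^{2^n-1}P\big(X_{k2^n+j:k2^n+j+m-1}=x_{1:m}\big).$$
   Context: Random hierarchical association (RHA) process. Fix positive integers $(k_n)_{n\ge0}$ (perplexities) with $k_{n-1}\le k_n\le k_{n-1}^2$ for all $n\ge1$. On a probability space $(\Omega,\mathcal J,P)$ let, for each $n\ge1$, $(L_{nj},R_{nj})_{j=1}^{k_n}$ be the lexicographically sorted enumeration of a uniformly random $k_n$-element subset of $\{1,\dots,k_{n-1}\}^2$ (each of the $\binom{k_{n-1}^2}{k_n}$ subsets equally likely), independently over $n$. Let $(C_n)_{n\ge0}$ be independent, independent of all $(L_{nj},R_{nj})$, with $C_n$ uniform on $\{1,\dots,k_n\}$. Define strings $Y^0_j=j$ (length 1) for $1\le j\le k_0$ and $Y^n_j=Y^{n-1}_{L_{nj}}Y^{n-1}_{R_{nj}}$ (concatenation) for $n\ge1$, $1\le j\le k_n$; so $Y^n_1,\dots,Y^n_{k_n}$ are distinct strings of length $2^n$ over $\{1,\dots,k_0\}$. The RHA process is the infinite sequence $\mathcal X=Y^0_{C_0}Y^1_{C_1}Y^2_{C_2}\cdots=X_1X_2X_3\cdots$ with $X_i\in\{1,\dots,k_0\}$,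 and $X_{k:l}=X_kX_{k+1}\cdots X_l$. *)

From mathcomp Require Import all_boot.
From Stdlib Require Import Reals.

Set Implicit Arguments.
Unset Strict Implicit.
Unset Printing Implicit Defensive.

Definition lexle (p q : nat * nat) : bool :=
  (p.1 < q.1)%N || ((p.1 == q.1) && (p.2 <= q.2)%N).

(* A realization of the randomness of levels 0..L.  Symbols / indices are
   0-based ordinals bounded by a common bound M (>= every k_n, n <= L):
   - c.1 n  (n < L) is the random subset drawn at level n+1 (a subset of
     {0..k_n - 1}^2, of size k_(n+1));
   - c.2 n  (n <= L) is C_n (0-based, < k_n). *)
Definition cfg (L M : nat) : finType :=
  ({ffun 'I_L -> {set 'I_M * 'I_M}} * {ffun 'I_L.+1 -> 'I_M})%type.

(* Validity = membership in the support of the product of uniform laws. *)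
Definition valid (k : nat -> nat) (L M : nat) (c : cfg L M) : bool :=
  [forall n : 'I_L,
     ([forall p in c.1 n, (p.1 < k n)%N && (p.2 < k n)%N])
     && (#|c.1 n| == k n.+1)]
  && [forall n : 'I_L.+1, (c.2 n < k n)%N].

(* Lexicographically sorted enumeration (L_{n+1,j}, R_{n+1,j})_j (0-based). *)
Definition pairs (L M : nat) (c : cfg L M) (n : nat) : seq (nat * nat) :=
  match @insub nat (fun t => (t < L)%N) 'I_L n with
  | Some o => sort lexle [seq (nat_of_ord p.1, nat_of_ord p.2) | p <- enum (c.1 o)]
  | None => [::]
  end.

(* C_n (0-based). *)
Definition Cn (L M : nat) (c : cfg L M) (n : nat) : nat :=
  match @insub nat (fun t => (t < L.+1)%N) 'I_L.+1 n with
  | Some o => nat_of_ord (c.2 o)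
  | None => 0
  end.

(* Y^n_{j+1} as a string over {1..k_0} (index j is 0-based). *)
Fixpoint Y (L M : nat) (c : cfg L M) (n j : nat) : seq nat :=
  match n with
  | 0 => [:: j.+1]
  | n'.+1 =>
      let p := nth (0, 0) (pairs c n') j in
      Y c n' p.1 ++ Y c n' p.2
  end.

(* Prefix Y^0_{C_0} Y^1_{C_1} ... Y^L_{C_L} of the RHA process
   (length 2^(L+1) - 1). *)
Definition Xpref (L M : nat) (c : cfg L M) : seq nat :=
  flatten [seq Y c n (Cn c n) | n <- iota 0 L.+1].

(* X_{i:i+m-1} (positions 1-based). *)
Definition window (L M : nat) (c : cfg L M) (i m : nat) : seq nat :=
  take m (drop i.-1 (Xpref c)).

(* P(X_{i:i+size x-1} = x): the event only depends on levels 0..L with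
   L := i + size x (since 2^(L+1)-1 >= i + size x - 1), so its probability is
   the proportion of valid level-0..L configurations realising it (the law of
   the randomness of these levels is the uniform law on valid configurations). *)
Definition Pwin (k : nat -> nat) (i : nat) (x : seq nat) : R :=
  let L := (i + size x)%N in
  let M := (\max_(n < L.+1) k n)%N in
  Rdiv (INR #|[set c : cfg L M | valid k c && (window c i (size x) == x)]|)
       (INR #|[set c : cfg L M | valid k c]|).

Fixpoint sumR (f : nat -> R) (N : nat) : R :=
  match N with
  | 0 => 0%R
  | N'.+1 => (sumR f N' + f N')%R
  end.

From mathcomp Require Import all_boot.
From Stdlib Require Import Reals.
From mathcomp Require Import zify fingroup perm.
From Stdlib Require Import Lia Lra.

Set Implicit Arguments.
Unset Strict Implicit.
Unset Printing Implicit Defensive.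

(* Cut the process into dyadic blocks: for [kk >= 1], positions
   [kk 2^n .. (kk+1) 2^n - 1] carry a string [Y^n_b], where [b = C_n] if
   [kk = 1] and otherwise [b] is the left or right child (according to the
   parity of [kk]) of the index of block [kk/2] of level [n+1].  A window of
   length [m <= 2^n] starting in block [kk] of level [n] thus only reads
   blocks [kk] and [kk+1].  The key fact is that the indices of two
   consecutive blocks of level [n] are uniform on [[0, k_n)^2] and
   independent of the subsets drawn at levels below [n]: a uniform element of
   a uniform [k_(n+1)]-subset of [[0, k_n)^2] is uniform, and so is the pair
   (second coordinate of one uniform element, first coordinate of an
   independent one).  Hence [P(X_(kk 2^n + j : ...) = x)] does not depend on
   [kk >= 1], the block sums [S_n] satisfy [S_(n+1) = 2 S_n], and the Cesàro
   means converge to [S_n / 2^n]. *)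

Section Blocks.
Local Notation "x ^ y" := (expn x y) : nat_scope.
Variables (L M : nat) (c : cfg L M).

Lemma size_Y n j : size (Y c n j) = 2 ^ n.
Proof. by elim: n j => [|n IH] j //=; rewrite size_cat !IH expnS mul2n addnn. Qed.

Definition child n (b : bool) j :=
  let q := nth (0, 0) (pairs c n) j in if b then q.2 else q.1.

Lemma Y_child n j : Y c n.+1 j = Y c n (child n false j) ++ Y c n (child n true j).
Proof. by []. Qed.

Fixpoint block_rec (fuel n kk : nat) : nat :=
  if fuel is fuel'.+1 then
    if kk <= 1 then Cn c n else child n (odd kk) (block_rec fuel' n.+1 kk./2)
  else 0.

(* Positions [kk 2^n .. (kk+1) 2^n - 1] of the process carry [Y^n_(block n kk)];
   [kk] itself is enough fuel since it is halved at each recursive call. *)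
Definition block n kk := block_rec kk n kk.

Lemma block_rec_fuel f f' n kk :
  1 <= kk -> kk <= f -> kk <= f' -> block_rec f n kk = block_rec f' n kk.
Proof.
elim: f f' n kk => [|f IH] [|f'] n kk //=; try lia.
by move=> h1 h2 h3; case: ifP => // hk; congr child; apply: IH; lia.
Qed.

Lemma block1 n : block n 1 = Cn c n. Proof. by []. Qed.

Lemma blockS n kk : 2 <= kk -> block n kk = child n (odd kk) (block n.+1 kk./2).
Proof.
case: kk => [|kk] //= h; rewrite /block /= ifF; last lia.
by congr child; apply: block_rec_fuel; lia.
Qed.

Lemma block_double n p : 1 <= p -> block n p.*2 = child n false (block n.+1 p).
Proof. by move=> hp; rewrite blockS ?odd_double ?doubleK //; lia. Qed.

Lemma block_doubleS n p : 1 <= p -> block n (p.*2).+1 = child n true (block n.+1 p).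
Proof.
move=> hp; rewrite blockS /=; last lia.
by rewrite odd_double uphalf_double.
Qed.

Lemma size_flatten_Y f n : size (flatten [seq Y c l (f l) | l <- iota 0 n]) = 2 ^ n - 1.
Proof.
elim: n => [|n IH] //.
rewrite -addn1 iotaD map_cat flatten_cat size_cat IH /= cats0 size_Y add0n.
by have := expn_gt0 2 n; rewrite expnD expn1; lia.
Qed.

Lemma Xpref_level n : n <= L ->
  take (2 ^ n) (drop (2 ^ n - 1) (Xpref c)) = Y c n (Cn c n).
Proof.
move=> hn; rewrite /Xpref.
have -> : L.+1 = n + (L - n).+1 by lia.
rewrite iotaD map_cat flatten_cat drop_size_cat ?size_flatten_Y //= add0n.
by rewrite take_size_cat // size_Y.
Qed.

Lemma Xpref_block n kk : 1 <= kk -> kk * 2 ^ n < 2 ^ L.+1 ->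
  take (2 ^ n) (drop (kk * 2 ^ n - 1) (Xpref c)) = Y c n (block n kk).
Proof.
elim/ltn_ind: kk n => kk IH n h1 h2.
have hpos := expn_gt0 2 n.
case: (leqP kk 1) => hk.
  move: h2; have -> : kk = 1 by lia.
  by rewrite !mul1n ltn_exp2l // => h2; rewrite Xpref_level.
rewrite blockS //.
have e := odd_double_half kk; set p := kk./2 in e *.
have e2 : 2 ^ n.+1 = 2 ^ n + 2 ^ n by rewrite expnS; lia.
have := IH p ltac:(lia) n.+1 ltac:(lia) ltac:(rewrite e2; nia).
rewrite Y_child; set D := drop _ (Xpref c) => HI.
case: (odd kk) e => e.
  have -> : kk * 2 ^ n - 1 = 2 ^ n + (p * 2 ^ n.+1 - 1) by rewrite e2; nia.
  rewrite -drop_drop -/D take_drop -(take_takel _ (_ : 2 ^ n + 2 ^ n <= 2 ^ n.+1)); last lia.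
  by rewrite HI take_oversize ?size_cat ?size_Y // drop_size_cat ?size_Y.
have -> : kk * 2 ^ n - 1 = p * 2 ^ n.+1 - 1 by rewrite e2; nia.
rewrite -/D -(take_takel _ (_ : 2 ^ n <= 2 ^ n.+1)); last lia.
by rewrite HI take_size_cat ?size_Y.
Qed.

Lemma window_block n kk j m : 1 <= kk -> j < 2 ^ n -> m <= 2 ^ n ->
  kk.+1 * 2 ^ n < 2 ^ L.+1 ->
  window c (kk * 2 ^ n + j) m
  = take m (drop j (Y c n (block n kk) ++ Y c n (block n kk.+1))).
Proof.
move=> h1 hj hm h3; have hpos := expn_gt0 2 n.
rewrite /window.
have -> : (kk * 2 ^ n + j).-1 = j + (kk * 2 ^ n - 1) by nia.
rewrite -drop_drop take_drop -(take_takel _ (_ : m + j <= 2 ^ n + 2 ^ n)); last lia.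
rewrite (takeD (2 ^ n) (2 ^ n)) Xpref_block; try nia.
rewrite drop_drop.
have -> : 2 ^ n + (kk * 2 ^ n - 1) = kk.+1 * 2 ^ n - 1 by nia.
by rewrite Xpref_block // -take_drop.
Qed.

End Blocks.

(* [pi c] is one coordinate of [c] and [up c x] overwrites it by [x]; on [V]
   this coordinate ranges over [D] independently of the others. *)
Section Resample.
Variables (T X : finType) (pi : T -> X) (up : T -> X -> T) (V : {set T}) (D : {set X}).
Hypotheses (piV : forall c, c \in V -> pi c \in D)
  (upV : forall c x, c \in V -> x \in D -> up c x \in V)
  (pi_up : forall c x, pi (up c x) = x)
  (up_up : forall c x y, up (up c x) y = up c y)
  (up_pi : forall c, up c (pi c) = c).

Lemma sum_resample (H : T -> X -> nat) :
  (forall c x y, H (up c y) x = H c x) ->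
  #|D| * \sum_(c in V) H c (pi c) = \sum_(c in V) \sum_(x in D) H c x.
Proof.
move=> H_up.
pose W x := [set c in V | pi c == x].
have fiber_sum G : \sum_(c in V) G c = \sum_(x in D) \sum_(c in W x) G c.
  rewrite (partition_big pi (mem D)); last by move=> c /piV.
  by apply: eq_bigr => x _; apply: eq_bigl => c; rewrite inE.
have fiber_shift x y : x \in D -> y \in D ->
    \sum_(c in W y) H c x = \sum_(c in W x) H c x.
  move=> hx hy.
  have -> : W y = (up^~ y) @: W x.
    apply/setP => c; apply/idP/imsetP.
      rewrite inE => /andP [hc /eqP hpc]; exists (up c x).
        by rewrite inE upV // pi_up eqxx.
      by rewrite up_up -hpc up_pi.
    by case=> c'; rewrite inE => /andP [hc' _] ->; rewrite inE upV // pi_up eqxx.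
  rewrite big_imset /=; first by apply: eq_bigr => c _; rewrite H_up.
  move=> c1 c2; rewrite !inE => /andP [_ /eqP h1] /andP [_ /eqP h2] e.
  by rewrite -(up_pi c1) -(up_pi c2) h1 h2 -(up_up c1 y) -(up_up c2 y) e.
rewrite exchange_big /= (fiber_sum (fun c => H c (pi c))) big_distrr /=.
apply: eq_bigr => x hx.
rewrite (fiber_sum (fun c => H c x)) -sum_nat_const.
apply: eq_bigr => y hy; rewrite (fiber_shift x y) //.
by apply: eq_bigr => c; rewrite inE => /andP [_ /eqP ->].
Qed.

End Resample.

Definition level_sets (M K k' : nat) : {set {set 'I_M * 'I_M}} :=
  [set S : {set 'I_M * 'I_M} |
     [forall p in S, (p.1 < K) && (p.2 < K)] && (#|S| == k')].

Definition ords_below (M K : nat) : {set 'I_M} := [set a : 'I_M | a < K].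

Lemma card_ords_below M K : K <= M -> #|ords_below M K| = K.
Proof.
move=> hK; rewrite -sum1_card (eq_bigl (fun a : 'I_M => a < K)) => [|a]; last by rewrite inE.
by rewrite -(big_ord_widen _ (fun _ => 1) hK) sum1_card card_ord.
Qed.

Lemma level_sets_mem M K k' S q : S \in level_sets M K k' -> q \in S -> (q.1 < K) && (q.2 < K).
Proof. by rewrite inE => /andP [/forallP h _] hq; have := h q; rewrite hq. Qed.

Lemma level_sets_card M K k' S : S \in level_sets M K k' -> #|S| = k'.
Proof. by rewrite inE => /andP [_ /eqP]. Qed.

Definition sorted_pairs M (S : {set 'I_M * 'I_M}) : seq (nat * nat) :=
  sort lexle [seq (nat_of_ord p.1, nat_of_ord p.2) | p <- enum S].

Lemma sum_sorted_pairs M K k' (S : {set 'I_M * 'I_M}) (g : nat -> nat -> nat) :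
  k' <= M -> S \in level_sets M K k' ->
  \sum_(a : 'I_M | a < k') g (nth (0, 0) (sorted_pairs S) a).1 (nth (0, 0) (sorted_pairs S) a).2
  = \sum_(q in S) g q.1 q.2.
Proof.
move=> hk /level_sets_card hS.
pose G p := g p.1 p.2.
rewrite -(big_ord_widen _ (fun a => G (nth (0, 0) (sorted_pairs S) a)) hk).
have <- : size (sorted_pairs S) = k' by rewrite size_sort size_map -cardE.
rewrite -(big_mkord xpredT (fun a => G (nth (0, 0) (sorted_pairs S) a))).
rewrite -(big_nth (0, 0) xpredT G).
by rewrite (perm_big _ (permEl (perm_sort _ _))) big_map big_enum.
Qed.

Section Configurations.
Variables (k : nat -> nat) (L M : nat).
Local Notation cT := (cfg L M).

Definition with_subset (c : cT) (o : 'I_L) (S : {set 'I_M * 'I_M}) : cT :=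
  ([ffun j => if j == o then S else c.1 j], c.2).
Definition with_choice (c : cT) (o : 'I_L.+1) (a : 'I_M) : cT :=
  (c.1, [ffun j => if j == o then a else c.2 j]).

Definition valid_cfgs : {set cT} := [set c | valid k c].

Lemma validP (c : cT) :
  reflect ((forall o : 'I_L, c.1 o \in level_sets M (k o) (k o.+1))
           /\ (forall o : 'I_L.+1, c.2 o \in ords_below M (k o)))
          (c \in valid_cfgs).
Proof.
rewrite inE; apply: (iffP andP) => [[/forallP h1 /forallP h2]|[h1 h2]]; split.
- by move=> o; rewrite inE; apply: h1.
- by move=> o; rewrite inE; apply: h2.
- by apply/forallP => o; have := h1 o; rewrite inE.
- by apply/forallP => o; have := h2 o; rewrite inE.
Qed.

Lemma valid_level_set (c : cT) (o : 'I_L) :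
  c \in valid_cfgs -> c.1 o \in level_sets M (k o) (k o.+1).
Proof. by case/validP. Qed.

Lemma sum_resample_subset (o : 'I_L) (H : cT -> {set 'I_M * 'I_M} -> nat) :
  (forall c S S', H (with_subset c o S') S = H c S) ->
  #|level_sets M (k o) (k o.+1)| * \sum_(c in valid_cfgs) H c (c.1 o)
  = \sum_(c in valid_cfgs) \sum_(S in level_sets M (k o) (k o.+1)) H c S.
Proof.
move=> hH; apply: (sum_resample (up := fun c S => with_subset c o S)) => //.
- by move=> c /validP [h _]; apply: h.
- move=> c S /validP [h1 h2] hS; apply/validP; split => // o'.
  by rewrite /= ffunE; case: eqP => [->|_].
- by move=> c S; rewrite /= ffunE eqxx.
- by move=> c S S'; congr pair; apply/ffunP => j; rewrite !ffunE; case: eqP.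
- by case=> c1 c2; congr pair; apply/ffunP => j; rewrite !ffunE; case: eqP => [->|].
Qed.

Lemma sum_resample_choice (o : 'I_L.+1) (H : cT -> nat -> nat) : k o <= M ->
  (forall c x a, H (with_choice c o a) x = H c x) ->
  k o * \sum_(c in valid_cfgs) H c (c.2 o)
  = \sum_(c in valid_cfgs) \sum_(a : 'I_M | a < k o) H c a.
Proof.
move=> hk hH; rewrite -{1}(card_ords_below hk).
rewrite (@sum_resample _ _ (fun c : cT => c.2 o) (fun c a => with_choice c o a)
    valid_cfgs (ords_below M (k o)) _ _ _ _ _ (fun c (a : 'I_M) => H c a)).
- by apply: eq_bigr => c _; apply: eq_bigl => a; rewrite inE.
- by move=> c /validP [_ h]; apply: h.
- move=> c S /validP [h1 h2] hS; apply/validP; split => // o'.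
  by rewrite /= ffunE; case: eqP => [->|_].
- by move=> c S; rewrite /= ffunE eqxx.
- by move=> c S S'; congr pair; apply/ffunP => j; rewrite !ffunE; case: eqP.
- by case=> c1 c2; congr pair; apply/ffunP => j; rewrite !ffunE; case: eqP => [->|].
- by move=> c x y; apply: hH.
Qed.

Lemma pairsE (c : cT) (o : 'I_L) : pairs c o = sorted_pairs (c.1 o).
Proof. by rewrite /pairs; case: insubP => [u _ /val_inj -> //|]; rewrite ltn_ord. Qed.

Lemma CnE (c : cT) (o : 'I_L.+1) : Cn c o = c.2 o.
Proof. by rewrite /Cn; case: insubP => [u _ /val_inj -> //|]; rewrite ltn_ord. Qed.

Lemma pairs_with_subset (c : cT) o S l :
  pairs (with_subset c o S) l = if l == o then sorted_pairs S else pairs c l.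
Proof.
case: (ltnP l L) => hl.
  by rewrite -[l]/(nat_of_ord (Ordinal hl)) !pairsE /= ffunE -val_eqE; case: ifP.
rewrite /pairs !insubF 1?ltnNge ?hl //; case: ifP => // /eqP e.
by move: (ltn_ord o); lia.
Qed.

Lemma Cn_with_choice (c : cT) o a l :
  Cn (with_choice c o a) l = if l == o then nat_of_ord a else Cn c l.
Proof.
case: (ltnP l L.+1) => hl.
  by rewrite -[l]/(nat_of_ord (Ordinal hl)) !CnE /= ffunE -val_eqE; case: ifP.
rewrite /Cn !insubF 1?ltnNge ?hl //; case: ifP => // /eqP e.
by move: (ltn_ord o); lia.
Qed.

End Configurations.

Section RandomSubset.
Variables (M K k' : nat).
Hypothesis KM : K <= M.
Local Notation sets := (level_sets M K k').
Local Notation pset := {set 'I_M * 'I_M}.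

Lemma sum_below_const (G : 'I_M -> nat) v :
  (forall x : 'I_M, x < K -> G x = v) -> \sum_(x : 'I_M | x < K) G x = K * v.
Proof.
move=> hG; rewrite (eq_bigr (fun _ => v)) // -{2}(card_ords_below KM) -sum_nat_const.
by apply: eq_bigl => x; rewrite inE.
Qed.

Definition side (b : bool) (q : 'I_M * 'I_M) := if b then q.2 else q.1.
Definition side_count (S : pset) b (x : 'I_M) := \sum_(q in S) (side b q == x : nat).

Definition below_stable (s : {perm 'I_M}) := forall z, (s z < K) = (z < K).

Lemma tperm_below_stable (x y : 'I_M) : x < K -> y < K -> below_stable (tperm x y).
Proof. by move=> hx hy z; case: tpermP => [->|->|] //; rewrite hx hy. Qed.

Definition relabel (s t : {perm 'I_M}) (S : pset) : pset := [set (s q.1, t q.2) | q in S].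

Section Relabel.
Variables (s t : {perm 'I_M}).
Hypotheses (s_stable : below_stable s) (t_stable : below_stable t).

Let relabel1_inj : injective (fun q : 'I_M * 'I_M => (s q.1, t q.2)).
Proof. by case=> a b [c d] [/perm_inj -> /perm_inj ->]. Qed.

Lemma relabel_sets S : (relabel s t S \in sets) = (S \in sets).
Proof.
rewrite !inE card_imset //; congr andb; apply/forallP/forallP => h q.
  by apply/implyP => hq; have := h (s q.1, t q.2); rewrite imset_f //= s_stable t_stable.
by apply/implyP => /imsetP [q' hq' ->] /=; rewrite s_stable t_stable; have := h q'; rewrite hq'.
Qed.

Lemma sum_relabel (F : pset -> nat) : \sum_(S in sets) F S = \sum_(S in sets) F (relabel s t S).
Proof.
rewrite (reindex_inj (imset_inj relabel1_inj)) /=.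
by apply: eq_bigl => S; rewrite relabel_sets.
Qed.

Lemma mem_relabel S x y : ((s x, t y) \in relabel s t S) = ((x, y) \in S).
Proof. exact: (mem_imset S (x, y) relabel1_inj). Qed.

Lemma side_count_relabel S b x :
  side_count (relabel s t S) b ((if b then t else s) x) = side_count S b x.
Proof.
rewrite /side_count big_imset /=; last by move=> ? ? _ _; apply: relabel1_inj.
by apply: eq_bigr => q _; case: b; rewrite /= (inj_eq perm_inj).
Qed.

End Relabel.

(* The relabellings [relabel (tperm x x') (tperm y y')] act transitively on
   [[0, K)^2] and preserve [sets], so every equivariant statistic has the same
   mean at all points of [[0, K)^2]. *)
Lemma sum_equivariant (w : pset -> 'I_M -> 'I_M -> nat) (T : nat) (x y : 'I_M) :
  x < K -> y < K ->
  (forall s t S x y, below_stable s -> below_stable t ->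
     w (relabel s t S) (s x) (t y) = w S x y) ->
  (forall S, S \in sets -> \sum_(x' : 'I_M | x' < K) \sum_(y' : 'I_M | y' < K) w S x' y' = T) ->
  K * K * \sum_(S in sets) w S x y = T * #|sets|.
Proof.
move=> hx hy w_eqv w_tot.
have w_const (x' y' : 'I_M) : x' < K -> y' < K ->
    \sum_(S in sets) w S x' y' = \sum_(S in sets) w S x y.
  move=> hx' hy'; have sx := tperm_below_stable hx hx'; have ty := tperm_below_stable hy hy'.
  rewrite (sum_relabel sx ty); apply: eq_bigr => S _.
  by rewrite -(w_eqv _ _ S x y sx ty) !tpermL.
have sum_w : \sum_(x' : 'I_M | x' < K) \sum_(y' : 'I_M | y' < K) \sum_(S in sets) w S x' y'
    = K * (K * \sum_(S in sets) w S x y).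
  apply: sum_below_const => x' hx'.
  by apply: sum_below_const => y' hy'; apply: w_const.
rewrite -mulnA -sum_w mulnC -sum_nat_const.
rewrite (eq_bigr (fun x' => \sum_(S in sets) \sum_(y' : 'I_M | y' < K) w S x' y'));
  last by move=> x' _; rewrite exchange_big.
by rewrite exchange_big; apply: eq_bigr => S hS; rewrite w_tot.
Qed.

Lemma sum_side S b (G : 'I_M -> nat) : S \in sets ->
  \sum_(q in S) G (side b q) = \sum_(x : 'I_M | x < K) G x * side_count S b x.
Proof.
move=> hS; rewrite /side_count.
rewrite (eq_bigr (fun x => \sum_(q in S) G x * (side b q == x))) => [|x _]; last first.
  by rewrite big_distrr.
rewrite exchange_big /=; apply: eq_bigr => q hq.
rewrite (bigD1 (side b q)) /=; last first.
  by have /andP [h1 h2] := level_sets_mem hS hq; case: b.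
by rewrite eqxx muln1 big1 ?addn0 // => x /andP [_ /negbTE]; rewrite eq_sym => ->; rewrite muln0.
Qed.

Lemma sum_pairs_below S (G : 'I_M -> 'I_M -> nat) : S \in sets ->
  \sum_(q in S) G q.1 q.2
  = \sum_(x : 'I_M | x < K) \sum_(y : 'I_M | y < K) G x y * ((x, y) \in S).
Proof.
move=> hS; rewrite pair_big_dep /=.
rewrite [LHS](eq_bigl (fun q : 'I_M * 'I_M => ((q.1 < K) && (q.2 < K)) && (q \in S))).
  rewrite [LHS]big_mkcondr; apply: eq_bigr => -[a b] _ /=.
  by case: (_ \in S); rewrite ?muln0 ?muln1.
by move=> q; case: (boolP (q \in S)) => [/(level_sets_mem hS) ->|]; rewrite ?andbF.
Qed.

Lemma sum_side2 S (G : 'I_M -> 'I_M -> nat) : S \in sets ->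
  \sum_(q in S) \sum_(q' in S) G (side true q) (side false q')
  = \sum_(x : 'I_M | x < K) \sum_(y : 'I_M | y < K)
      G x y * (side_count S true x * side_count S false y).
Proof.
move=> hS.
rewrite (eq_bigr (fun q => \sum_(y : 'I_M | y < K) G (side true q) y * side_count S false y))
  => [|q _]; last exact: sum_side.
rewrite exchange_big /=.
rewrite (eq_bigr (fun y =>
  \sum_(x : 'I_M | x < K) (G x y * side_count S false y) * side_count S true x))
  => [|y _]; last exact: (sum_side true (fun x => G x y * side_count S false y)).
rewrite exchange_big /=; apply: eq_bigr => x _; apply: eq_bigr => y _.
by rewrite -mulnA [side_count _ _ y * _]mulnC.
Qed.

Lemma sum_side_count S b : S \in sets -> \sum_(x : 'I_M | x < K) side_count S b x = k'.
Proof.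
move=> hS; rewrite -(level_sets_card hS) -sum1_card (sum_side b (fun _ => 1) hS).
by apply: eq_bigr => x _; rewrite mul1n.
Qed.

Lemma sum_mem_pairs S : S \in sets ->
  \sum_(x : 'I_M | x < K) \sum_(y : 'I_M | y < K) ((x, y) \in S : nat) = k'.
Proof.
move=> hS; rewrite -(level_sets_card hS) -sum1_card (sum_pairs_below (fun _ _ => 1) hS).
by apply: eq_bigr => x _; apply: eq_bigr => y _; rewrite mul1n.
Qed.

Lemma side_count_uniform b (x : 'I_M) : x < K ->
  K * \sum_(S in sets) side_count S b x = k' * #|sets|.
Proof.
move=> hx; have K_gt0 : 0 < K by apply: leq_ltn_trans hx.
apply/eqP; rewrite -(eqn_pmul2l K_gt0) mulnA mulnA; apply/eqP.
have -> : \sum_(S in sets) side_count S b x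
  = \sum_(S in sets) side_count S b (side b (x, x)) by case: b.
apply: (@sum_equivariant (fun S u v => side_count S b (side b (u, v)))) => //.
- by move=> s t S u v _ _; case: b; apply: side_count_relabel.
move=> S hS; case: b => /=.
- by apply: sum_below_const => u _; apply: sum_side_count.
- rewrite -(sum_side_count false hS) big_distrr /=; apply: eq_bigr => u _.
  exact: sum_below_const.
Qed.

Lemma mem_uniform (x y : 'I_M) : x < K -> y < K ->
  K * K * \sum_(S in sets) ((x, y) \in S : nat) = k' * #|sets|.
Proof.
move=> hx hy; apply: (@sum_equivariant (fun S u v => ((u, v) \in S : nat))) => //.
- by move=> s t S u v _ _; rewrite mem_relabel.
- exact: sum_mem_pairs.
Qed.

Lemma side_counts_uniform (x y : 'I_M) : x < K -> y < K ->
  K * K * \sum_(S in sets) (side_count S true x * side_count S false y) = k' * k' * #|sets|.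
Proof.
move=> hx hy.
rewrite (eq_bigr (fun S => side_count S false y * side_count S true x)) => [|S _]; last first.
  exact: mulnC.
apply: (@sum_equivariant (fun S u v => side_count S false u * side_count S true v)) => //.
- by move=> s t S u v _ _; rewrite (side_count_relabel _ _ S false) (side_count_relabel _ _ S true).
- move=> S hS; rewrite -{1}(sum_side_count false hS) big_distrl /=; apply: eq_bigr => u _.
  by rewrite -big_distrr /= sum_side_count.
Qed.

End RandomSubset.

Section BlockLaw.
Local Notation "x ^ y" := (expn x y) : nat_scope.
Variables (k : nat -> nat) (L M : nat).
Hypotheses (k_pos : forall n, 0 < k n) (k_le_M : forall l, l <= L -> k l <= M).
Local Notation cT := (cfg L M).
Local Notation V := (valid_cfgs k L M).
Local Notation sets o := (level_sets M (k o) (k o.+1)).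

Definition depends_below n (h : cT -> nat) :=
  (forall (o : 'I_L) c S, n <= o -> h (with_subset c o S) = h c) /\
  (forall o c a, h (with_choice c o a) = h c).

(* Resampling the subset of level [o] replaces the weight [W (c.1 o) x] by its
   mean [E / D] over [sets o]. *)
Lemma sum_resample_weight (o : 'I_L) (I : finType) (P : pred I) (h : cT -> I -> nat)
    (W : {set 'I_M * 'I_M} -> I -> nat) (D E : nat) :
  (forall c S x, h (with_subset c o S) x = h c x) ->
  (forall x, P x -> D * \sum_(S in sets o) W S x = E * #|sets o|) ->
  D * \sum_(c in V) \sum_(x | P x) h c x * W (c.1 o) x = E * \sum_(x | P x) \sum_(c in V) h c x.
Proof.
move=> h_inv W_mean.
have [-> | [c0 hc0]] := set_0Vmem V.
  by rewrite big_set0 muln0 big1 ?muln0 // => x _; rewrite big_set0.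
have sets_gt0 : 0 < #|sets o| by apply/card_gt0P; exists (c0.1 o); apply: valid_level_set.
apply/eqP; rewrite -(eqn_pmul2l sets_gt0); apply/eqP.
rewrite mulnCA (sum_resample_subset k (H := fun c S => \sum_(x | P x) h c x * W S x)); last first.
  by move=> c S S'; apply: eq_bigr => x _; rewrite h_inv.
rewrite big_distrr /=.
transitivity (\sum_(c in V) \sum_(x | P x) h c x * (E * #|sets o|)).
  apply: eq_bigr => c _; rewrite exchange_big /= big_distrr /=; apply: eq_bigr => x hx.
  by rewrite -(W_mean x hx) [RHS]mulnCA -big_distrr.
rewrite exchange_big /= (eq_bigr (fun x => (\sum_(c in V) h c x) * (E * #|sets o|)));
  last by move=> x _; rewrite big_distrl.
by rewrite -big_distrl /= mulnC -mulnA [RHS]mulnCA.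
Qed.

Lemma child_with_subset (c : cT) (o : 'I_L) S n b j : nat_of_ord o != n ->
  child (with_subset c o S) n b j = child c n b j.
Proof. by move=> h; rewrite /child pairs_with_subset eq_sym (negbTE h). Qed.

Lemma depends_below_children n (h : cT -> nat -> nat -> nat) b b' :
  (forall a a', depends_below n (fun c => h c a a')) ->
  forall a a', depends_below n.+1 (fun c => h c (child c n b a) (child c n b' a')).
Proof.
move=> hd a a'; split=> [o c S ho|o c a''] /=.
  rewrite !child_with_subset; try by apply/eqP; lia.
  by case: (hd (child c n b a) (child c n b' a')) => -> //; lia.
by case: (hd (child c n b a) (child c n b' a')) => _ ->.
Qed.

Lemma level_lt n q : 2 <= q -> q * 2 ^ n < 2 ^ L.+1 -> n < L.
Proof.
move=> hq h; rewrite -ltnS -(ltn_exp2l _ _ (ltnSn 1)); apply: leq_ltn_trans h.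
by rewrite expnS leq_mul2r hq orbT.
Qed.

Lemma sum_child (c : cT) (o : 'I_L) b (g : nat -> nat) : c \in V ->
  \sum_(a : 'I_M | a < k o.+1) g (child c o b a) = \sum_(q in c.1 o) g (side b q).
Proof.
move=> hc; rewrite /child pairsE.
rewrite (sum_sorted_pairs (fun p1 p2 => g (if b then p2 else p1)) _ (valid_level_set o hc)).
  by apply: eq_bigr => q _; case: b.
by apply: k_le_M; have := ltn_ord o; lia.
Qed.

Lemma sum_children (c : cT) (o : 'I_L) (g : nat -> nat -> nat) : c \in V ->
  \sum_(a : 'I_M | a < k o.+1) g (child c o false a) (child c o true a)
  = \sum_(q in c.1 o) g q.1 q.2.
Proof.
move=> hc; rewrite /child pairsE (sum_sorted_pairs g _ (valid_level_set o hc)) //.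
by apply: k_le_M; have := ltn_ord o; lia.
Qed.

Lemma block_uniform kk n (h : cT -> nat -> nat) : 1 <= kk -> kk * 2 ^ n < 2 ^ L.+1 ->
  (forall a, depends_below n (h^~ a)) ->
  k n * \sum_(c in V) h c (block c n kk) = \sum_(a : 'I_M | a < k n) \sum_(c in V) h c a.
Proof.
elim/ltn_ind: kk n h => kk IH n h h1 h2 hd.
case: (leqP kk 1) => hk.
  move: h2; have -> : kk = 1 by lia.
  rewrite mul1n ltn_exp2l // => h2; pose o := Ordinal h2.
  rewrite (eq_bigr (fun c => h c (c.2 o))) => [|c _]; last by rewrite block1 -CnE.
  rewrite (sum_resample_choice (o := o)); first by rewrite exchange_big.
    by apply: k_le_M.
  by move=> c x a; case: (hd x) => _ ->.
have e := odd_double_half kk; set p := kk./2 in e; set b := odd kk in e.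
have hp : 1 <= p by lia.
have hp2 : p * 2 ^ n.+1 < 2 ^ L.+1.
  by rewrite expnS mulnA; apply: leq_ltn_trans h2; rewrite leq_mul2r; apply/orP; right; lia.
have hnL : n < L by move: (leq_ltn_trans (leq_pmull _ hp) hp2); rewrite ltn_exp2l.
pose o := Ordinal hnL.
have W_mean (x : 'I_M) : x < k n ->
    k n * \sum_(S in sets o) side_count S b x = k n.+1 * #|sets o|.
  by move=> hx; apply: side_count_uniform => //; apply: k_le_M; lia.
apply/eqP; rewrite -(eqn_pmul2l (k_pos n.+1)) mulnCA; apply/eqP.
rewrite -(@sum_resample_weight o _ (fun x : 'I_M => x < k n) h (fun S => side_count S b)
  _ _ (fun c S x => (hd x).1 o c S (leqnn n)) W_mean).
congr (k n * _).
rewrite (eq_bigr (fun c => h c (child c n b (block c n.+1 p)))) => [|c _]; last first.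
  by rewrite (blockS _ _ (_ : 2 <= kk)).
rewrite (IH p _ n.+1 (fun c a => h c (child c n b a))) //; last first.
- by move=> a; exact: (@depends_below_children n (fun c a _ => h c a) b b (fun a _ => hd a) a a).
- lia.
rewrite exchange_big /=; apply: eq_bigr => c hc.
by rewrite (sum_child o b (h c) hc) (sum_side b (h c) (valid_level_set o hc)).
Qed.

Definition pair_uniform n kk := forall h : cT -> nat -> nat -> nat,
  (forall a b, depends_below n (fun c => h c a b)) ->
  k n * k n * \sum_(c in V) h c (block c n kk) (block c n kk.+1)
  = \sum_(a : 'I_M | a < k n) \sum_(b : 'I_M | b < k n) \sum_(c in V) h c a b.

(* Both blocks are the children of block [p] of level [n+1]. *)
Lemma pair_uniform_even n p : 1 <= p -> (p.*2).+1 * 2 ^ n < 2 ^ L.+1 -> pair_uniform n p.*2.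
Proof.
move=> hp hlev h hd.
have hnL : n < L by apply: (level_lt (q := (p.*2).+1)) => //; lia.
pose o := Ordinal hnL.
have W_mean (x : 'I_M * 'I_M) : (x.1 < k n) && (x.2 < k n) ->
    k n * k n * \sum_(S in sets o) (x \in S : nat) = k n.+1 * #|sets o|.
  by case: x => x y /andP [hx hy]; apply: mem_uniform => //; apply: k_le_M; lia.
apply/eqP; rewrite -(eqn_pmul2l (k_pos n.+1)) mulnCA pair_big_dep; apply/eqP.
rewrite -(@sum_resample_weight o _ _ (fun c (x : 'I_M * 'I_M) => h c x.1 x.2)
  (fun S x => x \in S : nat) _ _ (fun c S (x : 'I_M * 'I_M) => (hd x.1 x.2).1 o c S (leqnn n))
  W_mean).
congr (_ * _).
pose h' c a := h c (child c n false a) (child c n true a).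
have -> : \sum_(c in V) h c (block c n p.*2) (block c n (p.*2).+1)
    = \sum_(c in V) h' c (block c n.+1 p).
  by apply: eq_bigr => c _; rewrite block_double // block_doubleS.
rewrite (block_uniform (h := h')) //; last 2 first.
- by apply: leq_ltn_trans hlev; rewrite expnS mulnA leq_mul2r -muln2 mulnC leqnSn orbT.
- by move=> a; apply: depends_below_children.
rewrite exchange_big /=; apply: eq_bigr => c hc.
rewrite (sum_children o (h c) hc) (sum_pairs_below (h c) (valid_level_set o hc)).
by rewrite pair_big_dep; apply: eq_bigr => -[x y].
Qed.

(* The blocks are [C_n] and the left child of [C_(n+1)]. *)
Lemma pair_uniform_first n : 2 * 2 ^ n < 2 ^ L.+1 -> pair_uniform n 1.
Proof.
move=> hlev h hd.
have hnL : n < L by apply: (level_lt (q := 2)).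
pose o := Ordinal hnL; pose o0 : 'I_L.+1 := Ordinal (ltnW hnL : n < L.+1).
pose o1 : 'I_L.+1 := Ordinal (hnL : n.+1 < L.+1).
have W_mean (x : 'I_M * 'I_M) : (x.1 < k n) && (x.2 < k n) ->
    k n * \sum_(S in sets o) side_count S false x.2 = k n.+1 * #|sets o|.
  by case: x => x y /andP [hx hy]; apply: side_count_uniform => //; apply: k_le_M; lia.
apply/eqP; rewrite -(eqn_pmul2l (k_pos n.+1)) mulnCA pair_big_dep; apply/eqP.
rewrite -(@sum_resample_weight o _ _ (fun c (x : 'I_M * 'I_M) => h c x.1 x.2)
  (fun S x => side_count S false x.2) _ _
  (fun c S (x : 'I_M * 'I_M) => (hd x.1 x.2).1 o c S (leqnn n)) W_mean).
rewrite -mulnA; congr (_ * _).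
have -> : k n.+1 * \sum_(c in V) h c (block c n 1) (block c n 2)
    = \sum_(c in V) \sum_(y : 'I_M | y < k n) h c (c.2 o0) y * side_count (c.1 o) false y.
  rewrite (eq_bigr (fun c => h c (Cn c n) (child c n false (c.2 o1)))) => [|c _]; last first.
    by rewrite -(CnE c o1) (blockS c n (_ : 2 <= 2)).
  rewrite (sum_resample_choice (o := o1) (H := fun c a => h c (Cn c n) (child c n false a)));
    last 2 first; [exact: k_le_M | |].
    move=> c y a; rewrite Cn_with_choice ifF; last by apply/eqP; rewrite /=; lia.
    by case: (hd (Cn c n) (child c n false y)) => _ ->.
  apply: eq_bigr => c hc; rewrite (sum_child o false (h c (Cn c n)) hc).
  by rewrite (sum_side false (h c (Cn c n)) (valid_level_set o hc)) -(CnE c o0).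
rewrite (sum_resample_choice (o := o0)
  (H := fun c a => \sum_(y : 'I_M | y < k n) h c a y * side_count (c.1 o) false y));
  last 2 first; [exact: k_le_M (ltnW hnL) | |].
  by move=> c x a; apply: eq_bigr => y _; case: (hd x y) => _ ->.
by apply: eq_bigr => c _; rewrite pair_big_dep.
Qed.

(* The blocks are the right child of block [p] and the left child of block
   [p+1] of level [n+1]. *)
Lemma pair_uniform_odd n p : 1 <= p -> (p.*2).+2 * 2 ^ n < 2 ^ L.+1 ->
  pair_uniform n.+1 p -> pair_uniform n (p.*2).+1.
Proof.
move=> hp hlev IH h hd.
have hnL : n < L by apply: (level_lt (q := (p.*2).+2)) => //; lia.
pose o := Ordinal hnL.
have W_mean (x : 'I_M * 'I_M) : (x.1 < k n) && (x.2 < k n) ->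
    k n * k n * \sum_(S in sets o) (side_count S true x.1 * side_count S false x.2)
    = k n.+1 * k n.+1 * #|sets o|.
  by case: x => x y /andP [hx hy]; apply: side_counts_uniform => //; apply: k_le_M; lia.
have kn1_gt0 : 0 < k n.+1 * k n.+1 by rewrite muln_gt0 k_pos.
apply/eqP; rewrite -(eqn_pmul2l kn1_gt0) mulnCA pair_big_dep; apply/eqP.
rewrite -(@sum_resample_weight o _ _ (fun c (x : 'I_M * 'I_M) => h c x.1 x.2)
  (fun S x => side_count S true x.1 * side_count S false x.2) _ _
  (fun c S (x : 'I_M * 'I_M) => (hd x.1 x.2).1 o c S (leqnn n)) W_mean).
congr (_ * _).
pose h' c a b := h c (child c n true a) (child c n false b).
have -> : \sum_(c in V) h c (block c n (p.*2).+1) (block c n (p.*2).+2)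
    = \sum_(c in V) h' c (block c n.+1 p) (block c n.+1 p.+1).
  by apply: eq_bigr => c _; rewrite block_doubleS // -doubleS block_double.
rewrite (IH h'); last by move=> a b; apply: depends_below_children.
rewrite (eq_bigr (fun a : 'I_M => \sum_(c in V) \sum_(b : 'I_M | b < k n.+1) h' c a b))
  => [|a _]; last by rewrite exchange_big.
rewrite exchange_big /=; apply: eq_bigr => c hc.
have hS := valid_level_set o hc.
rewrite (eq_bigr (fun a : 'I_M => \sum_(q in c.1 o) h c (child c n true a) (side false q)))
  => [|a _]; last exact: (sum_child o false (h c (child c n true a)) hc).
rewrite (sum_child o true (fun z => \sum_(q in c.1 o) h c z (side false q)) hc).
by rewrite (sum_side2 (h c) hS) pair_big_dep.
Qed.

Lemma block_pair_uniform n kk : 1 <= kk -> kk.+1 * 2 ^ n < 2 ^ L.+1 -> pair_uniform n kk.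
Proof.
elim/ltn_ind: kk n => kk IH n hkk hlev.
have [p ekk] : exists p, kk = p.*2 \/ kk = (p.*2).+1.
  by exists kk./2; have := odd_double_half kk; case: (odd kk) => /= e; lia.
case: ekk => ekk; subst kk.
- by apply: pair_uniform_even => //; lia.
case: (posnP p) => hp; first by move: hlev; rewrite hp; exact: pair_uniform_first.
apply: pair_uniform_odd => //; apply: IH; try lia.
by rewrite expnS mulnA muln2 doubleS.
Qed.

End BlockLaw.

Lemma lexle_total : total lexle.
Proof. by move=> [a b] [c d]; rewrite /lexle /=; lia. Qed.

Lemma lexle_trans : transitive lexle.
Proof. by move=> [a b] [c d] [e f]; rewrite /lexle /=; lia. Qed.

Lemma lexle_anti : antisymmetric lexle.
Proof.
move=> [a b] [c d]; rewrite /lexle /= => h.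
by have [-> ->] : a = c /\ b = d by lia.
Qed.

Section Widen.
Variables (M K k' : nat).
Hypothesis KM : K <= M.

Definition widen_pair (q : 'I_K * 'I_K) : 'I_M * 'I_M := (widen_ord KM q.1, widen_ord KM q.2).

Lemma widen_pair_inj : injective widen_pair.
Proof. by move=> [a b] [c d] [/val_inj -> /val_inj ->]. Qed.

Lemma sorted_pairs_widen (S : {set 'I_K * 'I_K}) : sorted_pairs (widen_pair @: S) = sorted_pairs S.
Proof.
apply/perm_sortP; [exact: lexle_total | exact: lexle_trans | exact: lexle_anti |].
have val_pair_inj N : injective (fun p : 'I_N * 'I_N => (nat_of_ord p.1, nat_of_ord p.2)).
  by move=> [a b] [c d] [/val_inj -> /val_inj ->].
apply: uniq_perm; try by rewrite (map_inj_uniq (val_pair_inj _)) enum_uniq.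
move=> [a b]; apply/mapP/mapP => [[p] | [q]].
  by rewrite mem_enum => /imsetP [q hq ->] [-> ->]; exists q; rewrite ?mem_enum.
rewrite mem_enum => hq [-> ->]; exists (widen_pair q) => //.
by rewrite mem_enum; apply: imset_f.
Qed.

Lemma level_sets_widen :
  level_sets M K k'
  = (fun S : {set 'I_K * 'I_K} => widen_pair @: S) @: [set S : {set 'I_K * 'I_K} | #|S| == k'].
Proof.
apply/setP => S'; apply/idP/imsetP => [hS'|[S]]; last first.
  rewrite inE => /eqP hS ->; rewrite inE card_imset ?hS ?eqxx ?andbT; last exact: widen_pair_inj.
  by apply/forallP => p; apply/implyP => /imsetP [q _ ->] /=; rewrite !ltn_ord.
have widenK : widen_pair @: [set q | widen_pair q \in S'] = S'.
  apply/setP => p; apply/imsetP/idP => [[q] | hp]; first by rewrite inE => hq ->.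
  have /andP [h1 h2] := level_sets_mem hS' hp.
  have ep : p = widen_pair (Ordinal h1, Ordinal h2).
    by case: p h1 h2 {hp} => a b h1 h2; congr pair; apply/val_inj.
  by exists (Ordinal h1, Ordinal h2); rewrite // inE -ep.
exists [set q | widen_pair q \in S']; last by rewrite widenK.
by rewrite inE -(level_sets_card hS') -{2}widenK card_imset //; exact: widen_pair_inj.
Qed.

Lemma sum_level_sets_widen (g : seq (nat * nat) -> nat) :
  \sum_(S in level_sets M K k') g (sorted_pairs S)
  = \sum_(S : {set 'I_K * 'I_K} | #|S| == k') g (sorted_pairs S).
Proof.
rewrite level_sets_widen big_imset /=; last first.
  by move=> S1 S2 _ _; apply: imset_inj; exact: widen_pair_inj.
by apply: eq_big => S; rewrite ?inE // => _; rewrite sorted_pairs_widen.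
Qed.

Lemma card_level_sets : #|level_sets M K k'| = #|[set S : {set 'I_K * 'I_K} | #|S| == k']|.
Proof.
rewrite -!sum1_card (sum_level_sets_widen (fun _ => 1)).
by apply: eq_bigl => S; rewrite inE.
Qed.

Lemma level_sets_nonempty : k' <= K * K -> exists S, S \in level_sets M K k'.
Proof.
move=> hk; pose A := [set p : 'I_M * 'I_M | (p.1 < K) && (p.2 < K)].
have cardA : #|A| = K * K.
  have -> : A = setX (ords_below M K) (ords_below M K) by apply/setP => p; rewrite !inE.
  by rewrite cardsX card_ords_below.
exists [set p in take k' (enum A)]; rewrite inE; apply/andP; split.
  by apply/forallP => p; apply/implyP; rewrite inE => /mem_take; rewrite mem_enum inE.
rewrite cardsE (card_uniqP (take_uniq k' (enum_uniq (mem A)))).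
by rewrite size_take -cardE cardA; case: ltnP => //; lia.
Qed.

End Widen.

Fixpoint Ypairs (ps : nat -> seq (nat * nat)) (n j : nat) : seq nat :=
  if n is n'.+1 then
    let p := nth (0, 0) (ps n') j in Ypairs ps n' p.1 ++ Ypairs ps n' p.2
  else [:: j.+1].

Lemma Y_Ypairs L M (c : cfg L M) n j : Y c n j = Ypairs (pairs c) n j.
Proof. by elim: n j => //= n IH j; rewrite !IH. Qed.

Lemma Ypairs_ext ps ps' n j : (forall l, l < n -> ps l = ps' l) -> Ypairs ps n j = Ypairs ps' n j.
Proof.
elim: n j => //= n IH j h.
by rewrite (h n (ltnSn n)) !IH // => l hl; apply: h; lia.
Qed.

Definition set_level (ps : nat -> seq (nat * nat)) n s l := if l == n then s else ps l.

Definition depends_on_levels n (F : (nat -> seq (nat * nat)) -> nat) :=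
  forall ps ps', (forall l, l < n -> ps l = ps' l) -> F ps = F ps'.

Lemma depends_below_pairs L M n F :
  depends_on_levels n F -> depends_below n (fun c : cfg L M => F (pairs c)).
Proof.
move=> hF; split=> // o c S ho; apply: hF => l hl.
by rewrite pairs_with_subset; case: eqP => // e; lia.
Qed.

Section CanonicalSum.
Variable k : nat -> nat.

Definition canon_sets l := [set S : {set 'I_(k l) * 'I_(k l)} | #|S| == k l.+1].

(* Sum of [F] over all choices of the subsets of levels [0, n), each taken in
   its own type ['I_(k l) * 'I_(k l)]; unlike sums over [cfg L M], this does
   not depend on the bounds [L] and [M]. *)
Fixpoint canon_sum n (F : (nat -> seq (nat * nat)) -> nat) : nat :=
  if n is n'.+1 then
    canon_sum n' (fun ps => \sum_(S in canon_sets n') F (set_level ps n' (sorted_pairs S)))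
  else F (fun _ => [::]).

Definition canon_count n := \prod_(l < n) #|canon_sets l|.

Lemma canon_count_gt0 n : (forall l, k l.+1 <= k l * k l) -> 0 < canon_count n.
Proof.
move=> k_sq; apply: prodn_gt0 => l.
rewrite /canon_sets -(@card_level_sets (k l) (k l) (k l.+1) (leqnn _)).
have [S hS] := @level_sets_nonempty (k l) (k l) (k l.+1) (leqnn _) (k_sq l).
by apply/card_gt0P; exists S.
Qed.

Variables L M : nat.
Hypothesis k_le_M : forall l, l <= L -> k l <= M.
Local Notation V := (valid_cfgs k L M).

Lemma valid_cfgs_gt0 : (forall l, 0 < k l) -> (forall l, k l.+1 <= k l * k l) -> 0 < #|V|.
Proof.
move=> k_pos k_sq; have M_gt0 : 0 < M by apply: leq_trans (k_pos 0) (k_le_M _).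
pose S0 (o : 'I_L) := odflt set0 [pick S in level_sets M (k o) (k o.+1)].
apply/card_gt0P; exists ([ffun o => S0 o], [ffun _ => Ordinal M_gt0]).
apply/validP; split => o /=; last by rewrite ffunE inE; apply: k_pos.
rewrite ffunE /S0; case: pickP => //= none.
have [|S hS] := @level_sets_nonempty M (k o) (k o.+1) _ (k_sq o).
  by apply: k_le_M; have := ltn_ord o; lia.
by move: (none S); rewrite hS.
Qed.

Lemma sum_valid_canon n F : n <= L -> depends_on_levels n F ->
  canon_count n * \sum_(c in V) F (pairs c) = canon_sum n F * #|V|.
Proof.
elim: n F => [|n IH] F hn hF.
  rewrite /canon_count big_ord0 mul1n /= (eq_bigr (fun _ => F (fun _ => [::]))).
    by rewrite sum_nat_const mulnC.
  by move=> c _; apply: hF => l; rewrite ltn0.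
have hnL : n < L by lia.
pose o := Ordinal hnL.
pose F' ps := \sum_(S in canon_sets n) F (set_level ps n (sorted_pairs S)).
have hF' : depends_on_levels n F'.
  move=> ps ps' h; apply: eq_bigr => S _; apply: hF => l hl; rewrite /set_level.
  by case: eqP => // ne; apply: h; lia.
have resample : #|canon_sets n| * \sum_(c in V) F (pairs c) = \sum_(c in V) F' (pairs c).
  have hkn : k n <= M by apply: k_le_M; lia.
  rewrite /canon_sets -(@card_level_sets M (k n) (k n.+1) hkn).
  rewrite (eq_bigr (fun c => F (set_level (pairs c) n (sorted_pairs (c.1 o))))); last first.
    move=> c _; apply: hF => l hl; rewrite /set_level; case: eqP => [->|] //.
    by rewrite (pairsE c o).
  rewrite (sum_resample_subset k (o := o)
    (H := fun c S => F (set_level (pairs c) n (sorted_pairs S)))).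
    apply: eq_bigr => c _; rewrite /F' (@sum_level_sets_widen M (k n) (k n.+1) hkn
      (fun s => F (set_level (pairs c) n s))) /=.
    by apply: eq_bigl => S; rewrite inE.
  move=> c S S'; apply: hF => l hl; rewrite /set_level pairs_with_subset.
  by case: eqP => // ne; case: eqP => // e; exfalso; apply: ne; rewrite e.
by rewrite /canon_count big_ord_recr /= -/(canon_count n) -mulnA resample IH //; lia.
Qed.

End CanonicalSum.

Lemma card_setI_sum (T : finType) (A : {set T}) (P : pred T) :
  #|[set c | (c \in A) && P c]| = \sum_(c in A) (P c : nat).
Proof.
rewrite -sum1_card (eq_bigl (fun c => (c \in A) && P c)) => [|c]; last by rewrite inE.
by rewrite big_mkcondr /=; apply: eq_bigr => c _; case: (P c).
Qed.

Lemma INR_ratio_eq (a b c d : nat) : (0 < b)%N -> (0 < d)%N -> (a * d = c * b)%N ->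
  Rdiv (INR a) (INR b) = Rdiv (INR c) (INR d).
Proof.
move=> hb hd e.
have e' : (INR a * INR d = INR c * INR b)%R by rewrite -!mult_INR; congr INR.
have hb' : INR b <> 0%R by apply: not_0_INR; lia.
have hd' : INR d <> 0%R by apply: not_0_INR; lia.
by field_simplify_eq => //; rewrite e' Rmult_comm.
Qed.

Section WindowLaw.
Local Notation "x ^ y" := (expn x y) : nat_scope.
Variable k : nat -> nat.
Hypotheses (k_pos : forall n, 0 < k n) (k_sq : forall n, k n.+1 <= k n * k n).

Definition window_event n j (x : seq nat) a b (ps : nat -> seq (nat * nat)) : nat :=
  take (size x) (drop j (Ypairs ps n a ++ Ypairs ps n b)) == x.

Lemma window_event_depends n j x a b : depends_on_levels n (window_event n j x a b).
Proof. by move=> ps ps' hps; rewrite /window_event !(@Ypairs_ext ps ps' n). Qed.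

Definition window_count n j x :=
  \sum_(a < k n) \sum_(b < k n) canon_sum k n (window_event n j x a b).

Definition window_total n := k n * k n * canon_count k n.

Lemma block_lt_prefix kk n L : 1 <= kk -> kk * 2 ^ n <= L -> kk.+1 * 2 ^ n < 2 ^ L.+1.
Proof.
move=> hkk hL; apply: (@leq_ltn_trans (2 ^ (kk + n))).
  by rewrite expnD leq_mul2r ltn_expl ?orbT.
rewrite ltn_exp2l // ltnS; apply: leq_trans hL.
by have := ltn_expl n (ltnSn 1); nia.
Qed.

Lemma Pwin_window_law n kk j x : 1 <= kk -> j < 2 ^ n -> size x <= 2 ^ n ->
  Pwin k (kk * 2 ^ n + j) x = Rdiv (INR (window_count n j x)) (INR (window_total n)).
Proof.
move=> hkk hj hm; rewrite /Pwin.
set L := kk * 2 ^ n + j + size x; set M := \max_(l < L.+1) k l.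
have k_le_M l : l <= L -> k l <= M.
  by move=> hl; exact: (@leq_bigmax _ (fun l : 'I_L.+1 => k l) (Ordinal (hl : l < L.+1))).
have hlev : kk.+1 * 2 ^ n < 2 ^ L.+1 by apply: block_lt_prefix; rewrite /L; lia.
have hnL : n <= L by have := ltn_expl n (ltnSn 1); rewrite /L; nia.
pose h (c : cfg L M) a b := window_event n j x a b (pairs c).
have h_below (a b : nat) : depends_below n (fun c : cfg L M => h c a b).
  exact: (depends_below_pairs L M (@window_event_depends n j x a b)).
have count_event : #|[set c : cfg L M | valid k c && (window c (kk * 2 ^ n + j) (size x) == x)]|
    = \sum_(c in valid_cfgs k L M) h c (block c n kk) (block c n kk.+1).
  transitivity (\sum_(c in valid_cfgs k L M) (window c (kk * 2 ^ n + j) (size x) == x : nat)).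
    by rewrite -card_setI_sum; apply: eq_card => c; rewrite !inE.
  apply: eq_bigr => c _.
  by rewrite (window_block c hkk hj hm hlev) /h /window_event !Y_Ypairs.
apply: INR_ratio_eq; first exact: valid_cfgs_gt0.
  by rewrite /window_total !muln_gt0 !k_pos canon_count_gt0.
rewrite count_event /window_total mulnC [k n * k n * _]mulnC -mulnA.
rewrite (block_pair_uniform k_pos k_le_M hkk hlev h_below) big_distrr /=.
rewrite /window_count (big_ord_widen M (fun a => \sum_(b < k n)
  canon_sum k n (window_event n j x a b)) (k_le_M n hnL)) big_distrl /=.
apply: eq_bigr => a _.
rewrite (big_ord_widen M (fun b => canon_sum k n (window_event n j x a b)) (k_le_M n hnL)).
rewrite big_distrr big_distrl /=.
by apply: eq_bigr => b _; rewrite (sum_valid_canon k_le_M hnL (@window_event_depends n j x a b)).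
Qed.

End WindowLaw.

Section Cesaro.
Local Open Scope R_scope.

Lemma sumR_ext (f g : nat -> R) (N : nat) :
  (forall t : nat, (t < N)%nat -> f t = g t) -> sumR f N = sumR g N.
Proof. by elim: N => //= N IH h; rewrite IH ?h // => t ht; apply: h; lia. Qed.

Lemma sumR_add (f : nat -> R) (a b : nat) :
  sumR f (a + b) = sumR f a + sumR (fun t => f (a + t)%nat) b.
Proof.
elim: b => [|b IH] /=; first by rewrite addn0 Rplus_0_r.
by rewrite addnS /= IH Rplus_assoc.
Qed.

Lemma sumR_dev_le (g : nat -> R) (r : nat) (mu : R) : (forall t, 0 <= g t <= 1) ->
  Rabs (sumR g r - INR r * mu) <= INR r * (1 + Rabs mu).
Proof.
move=> g01; elim: r => [|r IH]; first by rewrite /= Rmult_0_l Rminus_0_r Rabs_R0; lra.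
rewrite [sumR g r.+1]/= S_INR.
have -> : sumR g r + g r - (INR r + 1) * mu = (sumR g r - INR r * mu) + (g r - mu) by ring.
apply: Rle_trans (Rabs_triang _ _) _.
have : Rabs (g r - mu) <= 1 + Rabs mu.
  by apply: Rle_trans (Rabs_triang _ _) _; rewrite Rabs_Ropp Rabs_pos_eq; have := g01 r; lra.
lra.
Qed.

(* Since the blocks [q B .. q B + B - 1] with [q >= 1] all sum to [B mu], only
   the first block and a final incomplete one deviate from [N mu]. *)
Lemma sumR_blocks_dev (P : nat -> R) (B : nat) (mu : R) :
  (0 < B)%nat -> (forall t, 0 <= P t <= 1) ->
  (forall q : nat, (1 <= q)%nat -> sumR (fun j => P (q * B + j)%nat) B = INR B * mu) ->
  forall N : nat, Rabs (sumR P N - INR N * mu) <= 2 * (INR B * (1 + Rabs mu)).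
Proof.
move=> B_gt0 P01 blocks N.
have dev_le (r : nat) : (r <= B)%nat -> forall f : nat -> R, (forall t, 0 <= f t <= 1) ->
    Rabs (sumR f r - INR r * mu) <= INR B * (1 + Rabs mu).
  move=> hr f f01; apply: Rle_trans (sumR_dev_le r mu f01) _.
  by apply: Rmult_le_compat_r; [have := Rabs_pos mu; lra | apply: le_INR; lia].
have bound_pos : 0 <= INR B * (1 + Rabs mu) by have := pos_INR B; have := Rabs_pos mu; nra.
rewrite (divn_eq N B); have r_lt := ltn_pmod N B_gt0.
case: (N %/ B)%nat => [|q]; first by rewrite mul0n add0n; have := dev_le _ (ltnW r_lt) P P01; lra.
have full : sumR P (q.+1 * B) = sumR P B + INR q * (INR B * mu).
  elim: q => [|q IH]; first by rewrite mul1n /=; lra.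
  by rewrite mulSnr sumR_add IH blocks // S_INR; ring.
rewrite sumR_add full plus_INR mult_INR S_INR.
have -> : forall s,
    sumR P B + INR q * (INR B * mu) + s - ((INR q + 1) * INR B + INR (N %% B)) * mu
    = (sumR P B - INR B * mu) + (s - INR (N %% B) * mu) by move=> *; ring.
apply: Rle_trans (Rabs_triang _ _) _.
have := dev_le B (leqnn B) P P01.
have := dev_le _ (ltnW r_lt) (fun t => P (q.+1 * B + t)%nat) (fun t => P01 _).
lra.
Qed.

Lemma cesaro_bounded_dev (f : nat -> R) (mu K : R) :
  (forall N : nat, Rabs (sumR f N - INR N * mu) <= K) ->
  Un_cv (fun N => / INR N * sumR (fun t => f t.+1) N) mu.
Proof.
move=> dev eps eps_gt0.
have K_ge0 : 0 <= K := Rle_trans _ _ _ (Rabs_pos _) (dev 0%nat).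
set K' := K + Rabs mu + Rabs (f 0%nat) + 1.
have K'_gt0 : 0 < K' by rewrite /K'; have := Rabs_pos mu; have := Rabs_pos (f 0%nat); lra.
have [N0 [N0_inv_lt N0_gt0]] := archimed_cor1 (eps / K') (Rdiv_lt_0_compat _ _ eps_gt0 K'_gt0).
exists N0 => n hn; rewrite /R_dist.
have n_gt0 : 0 < INR n by apply: lt_0_INR; lia.
have shift : sumR f n.+1 = f 0%nat + sumR (fun t => f t.+1) n.
  by rewrite -add1n sumR_add /= Rplus_0_l.
have -> : / INR n * sumR (fun t => f t.+1) n - mu
    = / INR n * ((sumR f n.+1 - INR n.+1 * mu) + mu - f 0%nat).
  by rewrite shift S_INR; field; lra.
rewrite Rabs_mult Rabs_inv (Rabs_pos_eq (INR n)); last lra.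
have num_le : Rabs (sumR f n.+1 - INR n.+1 * mu + mu - f 0%nat) <= K'.
  move: (dev n.+1); set A := sumR f n.+1 - INR n.+1 * mu => devA; rewrite /Rminus.
  have := Rabs_triang (A + mu) (- f 0%nat); have := Rabs_triang A mu.
  by rewrite Rabs_Ropp /K'; lra.
have inv_le : / INR n <= / INR N0 by apply: Rinv_le_contravar; [apply: lt_0_INR | apply: le_INR].
have : / INR N0 * K' < eps.
  by have := Rmult_lt_compat_r K' _ _ K'_gt0 N0_inv_lt; rewrite /Rdiv Rmult_assoc Rinv_l; lra.
have := Rabs_pos (sumR f n.+1 - INR n.+1 * mu + mu - f 0%nat).
have := Rinv_0_lt_compat _ n_gt0.
nra.
Qed.

End Cesaro.

Lemma Pwin_bounds k i x : (0 <= Pwin k i x <= 1)%R.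
Proof.
rewrite /Pwin; set L := (i + size x)%nat; set M := (\max_(l < L.+1) k l)%nat.
set a := #|[set c : cfg L M | valid k c && _]|; set b := #|[set c : cfg L M | valid k c]|.
have a_le_b : (a <= b)%nat.
  by apply: subset_leq_card; apply/subsetP => c; rewrite !inE => /andP [].
have a_ge0 := pos_INR a.
have [->|b_gt0] := posnP b; first by rewrite /= /Rdiv Rinv_0 Rmult_0_r; lra.
have b_gt0' : (0 < INR b)%R by apply: lt_0_INR; apply/ltP.
have : (INR a <= INR b)%R by apply: le_INR; apply/leP.
split; first by apply: Rmult_le_pos => //; apply/Rlt_le/Rinv_0_lt_compat.
by apply: (Rmult_le_reg_r (INR b)) => //; rewrite /Rdiv Rmult_assoc Rinv_l; lra.
Qed.

Section BlockSums.
Local Notation "x ^ y" := (expn x y) : nat_scope.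
Local Open Scope R_scope.
Variables (k : nat -> nat) (x : seq nat).
Hypotheses (k_pos : forall n, (0 < k n)%nat) (k_sq : forall n, (k n.+1 <= k n * k n)%nat).

Definition block_sum n kk := sumR (fun j => Pwin k (kk * 2 ^ n + j) x) (2 ^ n).

Lemma block_sum_shift n kk : (size x <= 2 ^ n)%nat -> (1 <= kk)%nat ->
  block_sum n kk = block_sum n 1.
Proof.
move=> hx hkk; apply: sumR_ext => j hj.
by rewrite !(Pwin_window_law k_pos k_sq).
Qed.

Lemma block_sumS n : (size x <= 2 ^ n)%nat -> block_sum n.+1 1 = 2 * block_sum n 1.
Proof.
move=> hx; transitivity (block_sum n 2 + block_sum n 3).
  rewrite /block_sum expnS mul2n -addnn sumR_add.
  by congr Rplus; apply: sumR_ext => j _; congr Pwin; lia.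
by rewrite !(@block_sum_shift n) //; ring.
Qed.

Lemma block_mean_add n d : (size x <= 2 ^ n)%nat ->
  block_sum (n + d) 1 / INR (2 ^ (n + d)) = block_sum n 1 / INR (2 ^ n).
Proof.
move=> hx; elim: d => [|d IH]; first by rewrite addn0.
have hx' : (size x <= 2 ^ (n + d))%nat by apply: leq_trans hx _; rewrite leq_exp2l ?leq_addr.
have pow_neq0 : INR (2 ^ (n + d)) <> 0 by apply: not_0_INR; have := expn_gt0 2 (n + d); lia.
rewrite addnS block_sumS // expnS mult_INR -IH.
by rewrite [INR 2]/=; field.
Qed.

Lemma block_mean_eq n n' : (size x <= 2 ^ n)%nat -> (size x <= 2 ^ n')%nat ->
  block_sum n 1 / INR (2 ^ n) = block_sum n' 1 / INR (2 ^ n').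
Proof.
move=> hx hx'; case: (leqP n n') => h.
  by rewrite -(subnKC h) block_mean_add.
by rewrite -(subnKC (ltnW h)) block_mean_add.
Qed.

End BlockSums.

(* In the statement below, [^] on [nat] is [Nat.pow], from the [Reals] notations. *)
Lemma Nat_pow_expn a b : Nat.pow a b = expn a b.
Proof. by elim: b => // b IH; rewrite expnS -IH /= mulnE. Qed.

Theorem theorem4 (k : nat -> nat)
  (k_pos : forall n, (0 < k n)%N)
  (k_grow : forall n, (k n <= k n.+1)%N /\ (k n.+1 <= (k n) ^ 2)%N) :
  forall (m : nat) (x : seq nat),
    (1 <= m)%N -> size x = m ->
    all (fun a => (1 <= a)%N && (a <= k 0)%N) x ->
    exists mu : R,
      Un_cv (fun N => Rmult (Rinv (INR N)) (sumR (fun t => Pwin k t.+1 x) N)) mu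
      /\ forall (n kk : nat), (m <= 2 ^ n)%N -> (1 <= kk)%N ->
           mu = Rmult (Rinv (INR (2 ^ n)))
                      (sumR (fun j => Pwin k (kk * 2 ^ n + j) x) (2 ^ n)).
Proof.
move=> m x _ <- _.
have k_sq n : (k n.+1 <= k n * k n)%N by have := (k_grow n).2; rewrite Nat_pow_expn expnS expn1.
have hm : (size x <= expn 2 (size x))%N by apply/ltnW/ltn_expl.
have pow_neq0 n : INR (expn 2 n) <> 0%R by apply: not_0_INR; have := expn_gt0 2 n; lia.
exists (block_sum k x (size x) 1 / INR (expn 2 (size x)))%R; split.
  apply: (cesaro_bounded_dev (sumR_blocks_dev (expn_gt0 2 (size x)) (Pwin_bounds k ^~ x) _)).
  move=> q hq; rewrite -[LHS]/(block_sum k x (size x) q) block_sum_shift //; field; exact: pow_neq0.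
move=> n kk; rewrite !Nat_pow_expn => hn hkk.
rewrite (block_mean_eq k_pos k_sq hm hn) Rmult_comm.
by rewrite -[sumR _ _]/(block_sum k x n kk) (block_sum_shift k_pos k_sq).
Qed.
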